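(* Let $\mathcal A(z)$, $\mathcal I$ be as in the context. The spectral abscissa $\zeta(\mathcal A(s))$ is a convex function of $s\in\mathcal I$ and satisfies $\zeta(\mathcal A(0))\le 0$. If $\zeta(\mathcal A(0))<0$, then the equation $\zeta(\mathcal A(s))=0$ admits at most one positive solution $s=\alpha\in\mathcal I$ and at most one negative solution $s=-\beta\in\mathcal I$.
   Context: Let $\mathcal N=\{1,\dots,N\}$. Let $\Pi=(\pi_{nn'})$ be an $N\times N$ infinitesimal generator matrix (nonnegative off-diagonal entries, zero row sums). Let $\Psi(z)$ be diagonal with entries $\psi_n(z)$, each a Lévy exponent $\psi_n(z)=\log E(e^{zL^{(n)}_1})$ of a Lévy process $L^{(n)}$. Let $\Upsilon(z)$ have diagonal entries $1$ and off-diagonal entries $\upsilon_{nn'}(z)$, each the MGF $E(e^{zX_{nn'}})$ of a real random variable ($\upsilon_{nn'}\equiv1$ when $\pi_{nn'}=0$). The domain of an MGF of $X$ is $\{z\in\mathbb C:E(e^{(\operatorname{Re}z)X})<\infty\}$; let $\mathcal S$ be the intersection of the domains of all $\psi_n$ and $\upsilon_{nn'}$ and $\mathcal I=\{\operatorname{Re}z:z\in\mathcal S\}$. Let $\Phi$ be diagonal with nonnegative entries $\phi_n$. Set $\mathcal A(z)=\Psi(z)+\Pi\odot\Upsilon(z)-\Phi$ for $z\in\mathcal S$, with $\odot$ the entrywise product. $\zeta(A)$ denotes the spectral abscissa: the maximum of the real parts of the eigenvalues of $A$. *)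

From HB Require Import structures.
From mathcomp Require Import all_boot all_order all_algebra.
From mathcomp Require Import all_classical all_reals all_analysis.
From mathcomp Require complex.
Import complex.ComplexField.
Set Implicit Arguments. Unset Strict Implicit. Unset Printing Implicit Defensive.
Import Order.TTheory GRing.Theory Num.Theory.
Import numFieldNormedType.Exports.
Local Open Scope classical_set_scope.
Local Open Scope ring_scope.

Section Defs.
Context (R : realType) (d : measure_display) (T : measurableType d)
  (P : probability T R).

Definition mgf (X : T -> R) (s : R) : \bar R :=
  (\int[P]_x (expR (s * X x))%:E)%E.

Definition in_mgf_domain (X : T -> R) (s : R) : Prop := (mgf X s < +oo)%E.

(** log E(e^{s X}) (meaningful for s in the domain). *)
Definition log_mgf (X : T -> R) (s : R) : R := ln (fine (mgf X s)).

Definition levy_process (L : R -> T -> R) : Prop :=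
  [/\ (forall t, 0 <= t -> measurable_fun setT (L t)),
      P [set x | L 0 x = 0] = 1%E,
      (forall s t (B : set R), 0 <= s -> s <= t -> measurable B ->
         P [set x | B (L t x - L s x)] = P [set x | B (L (t - s) x)]),
      (forall (k : nat) (t : nat -> R) (B : nat -> set R),
         0 <= t 0%N -> (forall i, t i <= t i.+1) ->
         (forall i, measurable (B i)) ->
         P (\bigcap_(i in [set j | (j < k)%N]) [set x | B i (L (t i.+1) x - L (t i) x)])
         = (\prod_(i < k) P [set x | B i (L (t i.+1) x - L (t i) x)%R])%E) &
      (forall eps : R, 0 < eps ->
         (fun h => fine (P [set x | eps < `|L h x|])) @ 0^'+ --> (0 : R))].

Definition levy_exponent (L : R -> T -> R) (s : R) : R := log_mgf (L 1) s.

End Defs.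

(** Spectral abscissa of a real square matrix: the maximum of the real parts
    of its (complex) eigenvalues (the set is finite and nonempty for n > 0,
    so its supremum is this maximum). *)
Definition spectral_abscissa (R : realType) (n : nat) (M : 'M[R]_n) : R :=
  sup [set complex.Re lam | lam in
        [set lam : complex.complex (R : rcfType) |
           @eigenvalue (complex.complex (R : rcfType)) n
             (map_mx (fun r : R => complex.Complex r 0) M) lam]].

Definition Amat (R : realType) (d : measure_display) (T : measurableType d)
  (P : probability T R) (N : nat) (L : 'I_N -> R -> T -> R)
  (X : 'I_N -> 'I_N -> T -> R) (Pi : 'M[R]_N) (phi : 'I_N -> R) (s : R)
  : 'M[R]_N :=
  let Psi := diag_mx (\row_n levy_exponent P (L n) s) in
  let Ups := \matrix_(n, n') (if n == n' then 1
                              else if Pi n n' == 0 then 1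
                              else fine (mgf P (X n n') s)) in
  let Phi := diag_mx (\row_n phi n) in
  Psi + map2_mx *%R Pi Ups - Phi.

(** The set I of real parts of the common domain S. *)
Definition Idom (R : realType) (d : measure_display) (T : measurableType d)
  (P : probability T R) (N : nat) (L : 'I_N -> R -> T -> R)
  (X : 'I_N -> 'I_N -> T -> R) (Pi : 'M[R]_N) : set R :=
  [set s | (forall n, in_mgf_domain P (L n 1) s) /\
           (forall n n', n != n' -> Pi n n' != 0 -> in_mgf_domain P (X n n') s)].

(* Kingman's argument.  For a Metzler matrix M, a positive vector z with M z <= c z
   bounds the real part of every eigenvalue by c, and conversely every c above the
   spectral abscissa admits a positive z with M z < c z.  The diagonal entries of A(s)
   are convex in s (Lévy exponents are log-MGFs) and the off-diagonal ones are zero or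
   log-convex (MGFs, by Hölder).  So if x and y are positive vectors that are
   subinvariant for A(s) and A(t), the weighted AM-GM inequality makes their geometric
   mean x^lam y^(1-lam) subinvariant for A(lam s + (1-lam) t) at the level
   lam c_s + (1-lam) c_t.  A(0) = Pi - Phi has nonpositive row sums, so its spectral
   abscissa is nonpositive, and a convex function that is negative at 0 vanishes at
   most once on each side of 0. *)

From HB Require Import structures.
From mathcomp Require Import all_boot all_order all_algebra.
From mathcomp Require Import all_classical all_reals all_analysis.
From mathcomp Require Import measurable_realfun.
From mathcomp Require complex.
From mathcomp Require Import lra ring.
Import Order.TTheory GRing.Theory Num.Theory.
Import complex.ComplexField complex.
Set Implicit Arguments. Unset Strict Implicit. Unset Printing Implicit Defensive.
Local Open Scope classical_set_scope.
Local Open Scope ring_scope.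

Definition metzler {R : numDomainType} {n} (A : 'M[R]_n) :=
  forall i j, i != j -> 0 <= A i j.

Lemma eigenvalue_tr (F : fieldType) n (g : 'M[F]_n) a :
  eigenvalue g^T a = eigenvalue g a.
Proof.
rewrite /eigenvalue /eigenspace !kermx_eq0 !row_free_unit -unitmx_tr.
by rewrite linearB /= tr_scalar_mx trmxK.
Qed.

Lemma sum_delta (R : pzSemiRingType) n (j : 'I_n) (c : R) (F : 'I_n -> R) :
  \sum_k (c *+ (j == k)) * F k = c * F j.
Proof.
rewrite (bigD1 j) //= eqxx mulr1n big1 ?addr0 // => k hk.
by rewrite eq_sym (negbTE hk) mulr0n mul0r.
Qed.

Lemma dot2_le_of_norm2_le (R : realFieldType) (ak bk aj bj zk zj q : R) :
  0 <= zk -> 0 <= zj -> 0 <= q ->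
  ak ^+ 2 + bk ^+ 2 <= q * zk ^+ 2 -> aj ^+ 2 + bj ^+ 2 <= q * zj ^+ 2 ->
  ak * aj + bk * bj <= q * zk * zj.
Proof.
move=> zk0 zj0 q0 hk hj; set x := ak * aj + bk * bj; set y := q * zk * zj.
have y0 : 0 <= y by rewrite /y !mulr_ge0.
have cs : x ^+ 2 <= (ak ^+ 2 + bk ^+ 2) * (aj ^+ 2 + bj ^+ 2).
  rewrite -subr_ge0 (_ : _ - _ = (ak * bj - bk * aj) ^+ 2) ?sqr_ge0 // /x; ring.
have : x ^+ 2 <= y ^+ 2.
  apply: (le_trans cs).
  rewrite (_ : y ^+ 2 = q * zk ^+ 2 * (q * zj ^+ 2)); last by rewrite /y; ring.
  by apply: ler_pM => //; rewrite addr_ge0 ?sqr_ge0.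
nra.
Qed.

Section MetzlerSpectrum.
Variable R : realType.
Local Notation C := (complex.complex (R : rcfType)).
Local Notation cmx A := (map_mx (fun r : R => complex.Complex r 0) A).
Implicit Types (n : nat).

Lemma Re_sum n (F : 'I_n -> C) : complex.Re (\sum_k F k) = \sum_k complex.Re (F k).
Proof. by apply: big_morph => //; case=> a b; case=> c d. Qed.

Lemma Im_sum n (F : 'I_n -> C) : complex.Im (\sum_k F k) = \sum_k complex.Im (F k).
Proof. by apply: big_morph => //; case=> a b; case=> c d. Qed.

Lemma eigenvalue_real_eigenpair n (A : 'M[R]_n) (l : C) : eigenvalue (cmx A) l ->
  exists a b : 'I_n -> R, (exists k, 0 < a k ^+ 2 + b k ^+ 2) /\
    forall j, \sum_k A j k * a k = complex.Re l * a j - complex.Im l * b j /\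
              \sum_k A j k * b k = complex.Re l * b j + complex.Im l * a j.
Proof.
rewrite -eigenvalue_tr => /eigenvalueP [v hv /negP v_neq0].
exists (fun k => complex.Re (v 0 k)), (fun k => complex.Im (v 0 k)); split.
  apply: contra_notP v_neq0 => hv0; apply/eqP/matrixP => i k; rewrite (ord1 i) mxE.
  have : ~ 0 < complex.Re (v 0 k) ^+ 2 + complex.Im (v 0 k) ^+ 2.
    by move=> h; apply: hv0; exists k.
  case: (v 0 k) => [x y] /= /negP; rewrite -leNgt => h.
  have /andP [] : (x ^+ 2 == 0) && (y ^+ 2 == 0).
    by rewrite -paddr_eq0 ?sqr_ge0 // eq_le h addr_ge0 ?sqr_ge0.
  by rewrite !sqrf_eq0 => /eqP -> /eqP ->.
move=> j; move/matrixP: hv => /(_ 0 j); rewrite !mxE => hj.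
have : \sum_k complex.Complex (A j k) 0 * v 0 k = l * v 0 j.
  by rewrite -hj; apply: eq_bigr => k _; rewrite !mxE mulrC.
move=> e; split.
- rewrite (_ : _ - _ = complex.Re (l * v 0 j)); last by case: (l); case: (v 0 j).
  rewrite -e Re_sum; apply: eq_bigr => k _.
  by case: (v 0 k) => x y /=; rewrite mul0r subr0.
- rewrite (_ : _ + _ = complex.Im (l * v 0 j)); last by case: (l); case: (v 0 j).
  rewrite -e Im_sum; apply: eq_bigr => k _.
  by case: (v 0 k) => x y /=; rewrite mul0r addr0.
Qed.

Lemma exists_argmax n (i0 : 'I_n) (f : 'I_n -> R) : exists j, forall k, f k <= f j.
Proof. by exists (Order.arg_max i0 xpredT f); case: arg_maxP => // j _ h k; apply: h. Qed.

Lemma exists_argmin n (i0 : 'I_n) (f : 'I_n -> R) : exists j, forall k, f j <= f k.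
Proof. by exists (Order.arg_min i0 xpredT f); case: arg_minP => // j _ h k; apply: h. Qed.

(* At an index [j] maximising [|a k + i b k| / z k], the eigen-equation and the sign
   pattern of [A] give [lr * |a j + i b j|^2 <= c * |a j + i b j|^2]. *)
Lemma metzler_eigenpair_Re_le n (A : 'M[R]_n) (a b z : 'I_n -> R) (lr li c : R) :
  metzler A -> (forall i, 0 < z i) -> (forall j, \sum_k A j k * z k <= c * z j) ->
  (exists k, 0 < a k ^+ 2 + b k ^+ 2) ->
  (forall j, \sum_k A j k * a k = lr * a j - li * b j /\
             \sum_k A j k * b k = lr * b j + li * a j) ->
  lr <= c.
Proof.
move=> hA z_gt0 hAz [k0 hk0] hab.
pose q k := (a k ^+ 2 + b k ^+ 2) / z k ^+ 2.
have [j hj] := exists_argmax k0 q.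
have zj_neq0 : z j != 0 by rewrite gt_eqF.
have q_ge0 k : 0 <= q k by rewrite divr_ge0 ?addr_ge0 ?sqr_ge0.
have normj : a j ^+ 2 + b j ^+ 2 = q j * z j ^+ 2 by rewrite divfK ?expf_neq0.
have normj_gt0 : 0 < a j ^+ 2 + b j ^+ 2.
  rewrite normj mulr_gt0 ?exprn_gt0 //; apply: lt_le_trans (hj k0).
  by rewrite divr_gt0 ?exprn_gt0.
have rayleigh : lr * (a j ^+ 2 + b j ^+ 2) = \sum_k A j k * (a k * a j + b k * b j).
  have [ea eb] := hab j.
  transitivity (a j * \sum_k A j k * a k + b j * \sum_k A j k * b k).
    by rewrite ea eb; ring.
  by rewrite !mulr_sumr -big_split /=; apply: eq_bigr => k _; ring.
have term k : A j k * (a k * a j + b k * b j) <= A j k * z k * (q j * z j).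
  have [->|kj] := eqVneq k j.
    rewrite -mulrA (_ : z j * (q j * z j) = a j * a j + b j * b j) //.
    by rewrite -!expr2 normj; ring.
  rewrite -mulrA; apply: ler_wpM2l; first by apply: hA; rewrite eq_sym.
  rewrite mulrCA mulrA.
  apply: dot2_le_of_norm2_le; [exact: ltW | exact: ltW | exact: q_ge0 | | by rewrite normj].
  by rewrite -ler_pdivrMr ?exprn_gt0 //; apply: hj.
rewrite -(ler_pM2r normj_gt0) rayleigh (le_trans (ler_sum _ (fun k _ => term k))) //.
rewrite -mulr_suml normj (_ : c * _ = c * z j * (q j * z j)); last ring.
by apply: ler_wpM2r; [exact: mulr_ge0 (q_ge0 j) (ltW (z_gt0 j)) | exact: hAz].
Qed.

Lemma metzler_eigenvalue_Re_le n (A : 'M[R]_n) (z : 'I_n -> R) c l :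
  metzler A -> (forall i, 0 < z i) -> (forall j, \sum_k A j k * z k <= c * z j) ->
  eigenvalue (cmx A) l -> complex.Re l <= c.
Proof.
move=> hA z_gt0 hAz /eigenvalue_real_eigenpair [a [b [ab_neq0 hab]]].
exact: metzler_eigenpair_Re_le hA z_gt0 hAz ab_neq0 hab.
Qed.

Lemma row_sum_le_abs_sum n (A : 'M[R]_n) j :
  \sum_k A j k * 1 <= (\sum_i \sum_k `|A i k|) * 1.
Proof.
rewrite mulr1 (le_trans (y := \sum_k `|A j k|)) //.
  by apply: ler_sum => k _; rewrite mulr1 ler_norm.
rewrite [leRHS](bigD1 j) //= lerDl sumr_ge0 // => i _.
by rewrite sumr_ge0 // => k _.
Qed.

Lemma eigenvalue_exists n (A : 'M[R]_n) : (0 < n)%N -> exists l, eigenvalue (cmx A) l.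
Proof.
move=> n_gt0; have : size (char_poly (cmx A)) != 1%N.
  by rewrite size_char_poly; case: n n_gt0 A.
by move/(@closed_rootP C) => [l hl]; exists l; rewrite eigenvalue_root_char.
Qed.

Lemma Re_eigenvalue_le_spectral_abscissa n (A : 'M[R]_n) l :
  metzler A -> eigenvalue (cmx A) l -> complex.Re l <= spectral_abscissa A.
Proof.
move=> hA hl; apply: ub_le_sup; last by exists l.
exists (\sum_i \sum_k `|A i k|) => _ [lam hlam <-].
exact: metzler_eigenvalue_Re_le hA _ (row_sum_le_abs_sum A) hlam.
Qed.

Lemma spectral_abscissa_le n (A : 'M[R]_n) (z : 'I_n -> R) c : (0 < n)%N ->
  metzler A -> (forall i, 0 < z i) -> (forall j, \sum_k A j k * z k <= c * z j) ->
  spectral_abscissa A <= c.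
Proof.
move=> n_gt0 hA z_gt0 hAz; apply: ge_sup.
  by have [l hl] := eigenvalue_exists A n_gt0; exists (complex.Re l), l.
by move=> _ [l hl <-]; exact: metzler_eigenvalue_Re_le hA z_gt0 hAz hl.
Qed.

Definition has_pos_subinvariant n (A : 'M[R]_n) (c : R) :=
  exists2 x : 'I_n -> R, (forall i, 0 < x i) & forall i, \sum_k A i k * x k < c * x i.

Lemma has_pos_subinvariant_le n (A : 'M[R]_n) c c' :
  has_pos_subinvariant A c -> c <= c' -> has_pos_subinvariant A c'.
Proof.
move=> [x x_gt0 hAx] cc'; exists x => // i.
by rewrite (lt_le_trans (hAx i)) // ler_pM2r.
Qed.

Lemma has_pos_subinvariant_abs_sum n (A : 'M[R]_n) :
  has_pos_subinvariant A (1 + \sum_i \sum_k `|A i k|).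
Proof.
exists (fun=> 1) => // i; rewrite (le_lt_trans (row_sum_le_abs_sum A i)) //.
by rewrite !mulr1 ltrDr.
Qed.

(* If some [u i < 0], the row at an index minimising [u k / x k] contradicts the strict
   inequality satisfied by [x]. *)
Lemma subinvariant_ge0 n (A : 'M[R]_n) (x u : 'I_n -> R) g : metzler A ->
  (forall i, 0 < x i) -> (forall i, \sum_k A i k * x k < g * x i) ->
  (forall i, \sum_k A i k * u k <= g * u i) -> forall i, 0 <= u i.
Proof.
move=> hA x_gt0 hAx hAu i; rewrite leNgt; apply/negP => ui_lt0.
have [m hm] := exists_argmin i (fun k => u k / x k).
pose t := u m / x m.
have t_lt0 : t < 0 by rewrite (le_lt_trans (hm i)) // pmulr_llt0 ?invr_gt0.
have um : u m = t * x m by rewrite /t divfK ?gt_eqF.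
have hAtx : t * \sum_k A m k * x k <= \sum_k A m k * u k.
  rewrite mulr_sumr; apply: ler_sum => k _; rewrite mulrCA.
  have [->|km] := eqVneq k m; first by rewrite um.
  by rewrite ler_wpM2l ?hA 1?eq_sym // -ler_pdivlMr //; apply: hm.
have hgx : t * (g * x m) < t * \sum_k A m k * x k by rewrite ltr_nM2l.
by move: (lt_le_trans hgx (le_trans hAtx (hAu m))); rewrite um mulrCA ltxx.
Qed.

Lemma resolvent_vector n (A : 'M[R]_n) c : A - c%:M \in unitmx ->
  exists u : 'I_n -> R, forall j, \sum_k A j k * u k = c * u j - 1.
Proof.
move=> hunit; pose v := invmx (A - c%:M) *m const_mx (-1) : 'cV[R]_n.
have /matrixP hv : (A - c%:M) *m v = const_mx (-1) by rewrite mulKVmx.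
clearbody v; exists (fun k => v k 0) => j; move: (hv j 0); rewrite !mxE.
under eq_bigr => k _ do rewrite !mxE mulrBl.
rewrite sumrB sum_delta; lra.
Qed.

Lemma resolvent_subinvariant n (A : 'M[R]_n) (u : 'I_n -> R) c : metzler A ->
  (forall j, \sum_k A j k * u k = c * u j - 1) -> (forall i, 0 <= u i) ->
  exists2 c', c' < c & has_pos_subinvariant A c'.
Proof.
move=> hA hAu u_ge0.
have u_gt0 i : 0 < u i.
  rewrite lt_neqAle u_ge0 andbT; apply/negP => /eqP ui0; move: (hAu i).
  rewrite (bigD1 i) //= -ui0 !mulr0 add0r => hsum.
  have : 0 <= \sum_(k | k != i) A i k * u k.
    by apply: sumr_ge0 => k ki; rewrite mulr_ge0 ?hA // eq_sym.
  by rewrite hsum; lra.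
pose S := 1 + \sum_k u k.
have u_lt_S i : u i < S.
  rewrite /S (bigD1 i) //=.
  have : 0 <= \sum_(k | k != i) u k by rewrite sumr_ge0.
  lra.
have S_gt0 : 0 < S.
  have : 0 <= \sum_k u k by rewrite sumr_ge0.
  rewrite /S; lra.
exists (c - S^-1); first by rewrite gtrBl invr_gt0.
exists u => // i; rewrite hAu mulrBl ltrD2l ltrN2 mulrC.
by rewrite ltr_pdivrMr // mul1r.
Qed.

(* [u = (c - A)^-1 1] is nonnegative by [subinvariant_ge0] (applied at a level just
   above [c]), hence a positive vector that is strictly subinvariant below [c]. *)
Lemma has_pos_subinvariant_below n (A : 'M[R]_n) c : metzler A ->
  (forall g, c < g -> has_pos_subinvariant A g) -> A - c%:M \in unitmx ->
  exists2 c', c' < c & has_pos_subinvariant A c'.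
Proof.
move=> hA hG /resolvent_vector [u hAu]; apply: (resolvent_subinvariant hA hAu).
pose M := 1 + \sum_k `|u k|.
have u_lt_M i : - u i < M.
  rewrite /M (bigD1 i) //=; have : 0 <= \sum_(k | k != i) `|u k| by rewrite sumr_ge0.
  have := ler_norm (- u i); rewrite normrN; lra.
have M_gt0 : 0 < M.
  have : 0 <= \sum_k `|u k| by rewrite sumr_ge0.
  rewrite /M; lra.
have /hG [x x_gt0 hAx] : c < c + M^-1 by rewrite ltrDl invr_gt0.
apply: subinvariant_ge0 hA x_gt0 hAx _ => i; rewrite hAu mulrDl lerD2l.
by rewrite mulrC ler_pdivlMr // mulN1r lerNl ltW.
Qed.

(* The infimum of the levels admitting a positive subinvariant vector would otherwise
   be a real eigenvalue above the spectral abscissa. *)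
Lemma has_pos_subinvariant_gt_spectral_abscissa n (A : 'M[R]_n) c :
  metzler A -> spectral_abscissa A < c -> has_pos_subinvariant A c.
Proof.
move=> hA hc; pose G := [set g | has_pos_subinvariant A g].
apply: contrapT => notGc.
have c_lb g : G g -> c < g.
  by move=> Gg; rewrite ltNge; apply/negP => /(has_pos_subinvariant_le Gg).
have hinf : has_inf G.
  split; first by exists (1 + \sum_i \sum_k `|A i k|); apply: has_pos_subinvariant_abs_sum.
  by exists c => g /c_lb /ltW.
pose cs := inf G.
have c_le_cs : c <= cs by apply: lb_le_inf hinf.1 _ => g /c_lb /ltW.
have Gcs g : cs < g -> G g.
  rewrite -subr_gt0 => /inf_adherent /(_ hinf) [g' Gg' g'g].
  by apply: has_pos_subinvariant_le Gg' _; rewrite /cs in g'g; lra.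
have cs_unit : A - cs%:M \in unitmx.
  apply: contraT => cs_sing.
  have : eigenvalue (cmx A) (complex.Complex cs 0).
    rewrite /eigenvalue /eigenspace kermx_eq0 row_free_unit.
    have -> : cmx A - (complex.Complex cs 0)%:M = map_mx (real_complex R) (A - cs%:M).
      by rewrite map_mxB map_scalar_mx.
    by rewrite map_unitmx.
  move/(Re_eigenvalue_le_spectral_abscissa hA) => /= cs_le; lra.
have [c' c'_lt Gc'] := has_pos_subinvariant_below hA Gcs cs_unit.
by have := ge_inf hinf.2 Gc'; rewrite -/cs; lra.
Qed.

End MetzlerSpectrum.

Section GeometricMean.
Variable R : realType.
Implicit Types (lam u v : R).

Definition geomean lam u v : R := expR (lam * ln u + (1 - lam) * ln v).

Lemma geomean_gt0 lam u v : 0 < geomean lam u v.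
Proof. exact: expR_gt0. Qed.

Lemma geomeanM lam u u' v v' : 0 < u -> 0 < u' -> 0 < v -> 0 < v' ->
  geomean lam (u * u') (v * v') = geomean lam u v * geomean lam u' v'.
Proof. by move=> *; rewrite /geomean -expRD !lnM ?posrE //; congr expR; ring. Qed.

Lemma geomeanxx lam u : 0 < u -> geomean lam u u = u.
Proof. by move=> u_gt0; rewrite /geomean -mulrDl subrKC mul1r lnK. Qed.

Lemma geomean_le_avg lam u v : 0 <= lam -> lam <= 1 -> 0 < u -> 0 < v ->
  geomean lam u v <= lam * u + (1 - lam) * v.
Proof.
move=> lam_ge0 lam_le1 u_gt0 v_gt0.
by have := convex_expR (Itv01 lam_ge0 lam_le1) (ln u) (ln v); rewrite !convRE /= !lnK.
Qed.

Lemma ln_geomean lam u v : ln (geomean lam u v) = lam * ln u + (1 - lam) * ln v.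
Proof. exact: expRK. Qed.

End GeometricMean.

Section Kingman.
Variable R : realType.

Lemma geomean_offdiag_le (lam a b c xk xj yk yj : R) :
  0 <= lam -> lam <= 1 -> 0 < a -> 0 < b -> c <= geomean lam a b ->
  0 < xk -> 0 < xj -> 0 < yk -> 0 < yj ->
  c * geomean lam xk yk <=
    geomean lam xj yj * (lam * (a * xk / xj) + (1 - lam) * (b * yk / yj)).
Proof.
move=> lam_ge0 lam_le1 a_gt0 b_gt0 hc xk_gt0 xj_gt0 yk_gt0 yj_gt0.
have pos_ratio (p q r : R) : 0 < p -> 0 < q -> 0 < r -> 0 < p * q / r.
  by move=> *; rewrite divr_gt0 ?mulr_gt0.
apply: (le_trans (ler_wpM2r (ltW (geomean_gt0 _ _ _)) hc)).
have rescale : geomean lam (a * xk) (b * yk) =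
    geomean lam (a * xk / xj) (b * yk / yj) * geomean lam xj yj.
  by rewrite -geomeanM ?pos_ratio // !divfK ?lt0r_neq0.
rewrite -geomeanM // rescale [leRHS]mulrC ler_wpM2r ?geomean_le_avg ?pos_ratio //.
exact/ltW/geomean_gt0.
Qed.

Section RowBound.
Variables (n : nat) (A B C : 'M[R]_n) (lam : R).
Hypotheses (lam_ge0 : 0 <= lam) (lam_le1 : lam <= 1) (hA : metzler A) (hB : metzler B).
Hypothesis C_diag : forall j, C j j <= lam * A j j + (1 - lam) * B j j.
Hypothesis C_offdiag : forall j k, j != k -> C j k = 0 \/
  [/\ 0 < A j k, 0 < B j k & C j k <= geomean lam (A j k) (B j k)].

Lemma geomean_subinvariant (x y : 'I_n -> R) (a b : R) :
  (forall i, 0 < x i) -> (forall i, 0 < y i) ->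
  (forall j, \sum_k A j k * x k <= a * x j) -> (forall j, \sum_k B j k * y k <= b * y j) ->
  forall j, \sum_k C j k * geomean lam (x k) (y k) <=
            (lam * a + (1 - lam) * b) * geomean lam (x j) (y j).
Proof.
move=> x_gt0 y_gt0 hAx hBy j.
have term k : C j k * geomean lam (x k) (y k) <= geomean lam (x j) (y j) *
    (lam * (A j k * x k / x j) + (1 - lam) * (B j k * y k / y j)).
  have [->|kj] := eqVneq k j.
    by rewrite !mulfK ?gt_eqF // mulrC ler_wpM2l ?C_diag // ltW ?geomean_gt0.
  have jk : j != k by rewrite eq_sym.
  have [->|[Ajk_gt0 Bjk_gt0 hC]] := C_offdiag jk.
    have ratio_ge0 (M : 'M[R]_n) (w : 'I_n -> R) :
        metzler M -> (forall i, 0 < w i) -> 0 <= M j k * w k / w j.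
      by move=> hM w_gt0; rewrite divr_ge0 ?mulr_ge0 ?hM // ltW.
    rewrite mul0r; apply: mulr_ge0; first exact/ltW/geomean_gt0.
    by rewrite addr_ge0 // mulr_ge0 ?subr_ge0 // ratio_ge0.
  exact: geomean_offdiag_le lam_ge0 lam_le1 Ajk_gt0 Bjk_gt0 hC
    (x_gt0 k) (x_gt0 j) (y_gt0 k) (y_gt0 j).
rewrite (le_trans (ler_sum _ (fun k _ => term k))) // -mulr_sumr mulrC.
rewrite ler_pM2r ?geomean_gt0 // big_split /= -!mulr_sumr -!mulr_suml.
by apply: lerD; apply: ler_wpM2l; rewrite ?subr_ge0 ?ler_pdivrMr.
Qed.

Lemma spectral_abscissa_geomean_le : (0 < n)%N -> metzler C ->
  spectral_abscissa C <= lam * spectral_abscissa A + (1 - lam) * spectral_abscissa B.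
Proof.
move=> n_gt0 hC; apply/ler_addgt0Pr => e e_gt0.
have below_shift (M : 'M[R]_n) : spectral_abscissa M < spectral_abscissa M + e.
  by rewrite ltrDl.
have [x x_gt0 hAx] := has_pos_subinvariant_gt_spectral_abscissa hA (below_shift A).
have [y y_gt0 hBy] := has_pos_subinvariant_gt_spectral_abscissa hB (below_shift B).
set a := spectral_abscissa A in hAx *; set b := spectral_abscissa B in hBy *.
have -> : lam * a + (1 - lam) * b + e = lam * (a + e) + (1 - lam) * (b + e) by ring.
apply: (spectral_abscissa_le n_gt0 hC (fun k => geomean_gt0 lam (x k) (y k))).
by apply: geomean_subinvariant => // j; apply: ltW.
Qed.

End RowBound.
End Kingman.

Section MomentGeneratingFunction.
Context (R : realType) (d : measure_display) (T : measurableType d)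
  (P : probability T R) (X : T -> R).
Hypothesis mX : measurable_fun setT X.

Lemma measurable_expR_mul s : measurable_fun setT (fun x => expR (s * X x)).
Proof. by apply: measurableT_comp; [exact: measurable_expR | exact: measurable_funM]. Qed.

Lemma mgf_ge0 s : (0 <= mgf P X s)%E.
Proof. by apply: integral_ge0 => x _; rewrite lee_fin expR_ge0. Qed.

Lemma mgf_fineK s : in_mgf_domain P X s -> (fine (mgf P X s))%:E = mgf P X s.
Proof. by move=> h; rewrite fineK // ge0_fin_numE // mgf_ge0. Qed.

Lemma mgf0 : mgf P X 0 = 1%E.
Proof.
rewrite /mgf; under eq_integral => x _ do rewrite mul0r expR0.
by rewrite integral_cst // mul1e; exact: probability_setT.
Qed.

(* A null integral would force the positive integrand to vanish almost surely. *)
Lemma mgf_gt0 s : in_mgf_domain P X s -> 0 < fine (mgf P X s).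
Proof.
move=> hs; rewrite lt_neqAle fine_ge0 ?mgf_ge0 // andbT; apply/eqP => mgf_eq0.
have mexp : measurable_fun setT (fun x => (expR (s * X x))%:E).
  exact/measurable_EFinP/measurable_expR_mul.
have : (\int[P]_x `|(expR (s * X x))%:E| = 0)%E.
  rewrite (_ : 0%E = mgf P X s); last by rewrite -mgf_fineK // -mgf_eq0.
  apply: eq_integral => x _.
  by rewrite gee0_abs // lee_fin expR_ge0.
move/(ae_eq_integral_abs _ measurableT mexp) => [N [mN PN0 sub]].
suff : P setT = 0%E by rewrite probability_setT => /eqP; rewrite onee_eq0.
apply: (subset_measure0 _ mN) => // x _; apply: sub => /= /(_ I) /eqP.
by rewrite eqe gt_eqF // expR_gt0.
Qed.

(* Hölder's inequality, obtained by integrating the weighted AM-GM inequality for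
   [e^{s X} / E(e^{s X})] and [e^{t X} / E(e^{t X})]. *)
Lemma mgf_le_geomean s t lam : in_mgf_domain P X s -> in_mgf_domain P X t ->
  0 <= lam -> lam <= 1 ->
  (mgf P X (lam * s + (1 - lam) * t) <=
     (geomean lam (fine (mgf P X s)) (fine (mgf P X t)))%:E)%E.
Proof.
move=> hs ht lam_ge0 lam_le1.
set ms := fine (mgf P X s); set mt := fine (mgf P X t); set K := geomean lam ms mt.
have [ms_gt0 mt_gt0] := (mgf_gt0 hs, mgf_gt0 ht).
pose a := K * lam / ms; pose b := K * (1 - lam) / mt.
have [a_ge0 b_ge0] : 0 <= a /\ 0 <= b.
  by split; rewrite divr_ge0 ?mulr_ge0 ?subr_ge0 // ltW ?geomean_gt0.
have pointwise x : expR ((lam * s + (1 - lam) * t) * X x) <=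
    a * expR (s * X x) + b * expR (t * X x).
  set es := expR (s * X x); set et := expR (t * X x).
  have [es_gt0 et_gt0] : 0 < es / ms /\ 0 < et / mt by rewrite !divr_gt0 ?expR_gt0.
  have -> : expR ((lam * s + (1 - lam) * t) * X x) = geomean lam (es / ms * ms) (et / mt * mt).
    by rewrite !divfK ?gt_eqF // /geomean !expRK mulrDl !mulrA.
  rewrite geomeanM // -/K mulrC.
  have -> : a * es + b * et = K * (lam * (es / ms) + (1 - lam) * (et / mt)) by rewrite /a /b; ring.
  by rewrite ler_wpM2l ?geomean_le_avg // ltW ?geomean_gt0.
have mexp (c u : R) : measurable_fun setT (fun x => (c * expR (u * X x))%:E).
  exact/measurable_EFinP/measurable_funM/measurable_expR_mul.
have int_scale (c u : R) : 0 <= c ->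
    (\int[P]_x (c * expR (u * X x))%:E = c%:E * mgf P X u)%E.
  by move=> c_ge0; rewrite -ge0_integralZl_EFin //; exact/measurable_EFinP/measurable_expR_mul.
apply: (@le_trans _ _ (\int[P]_x ((a * expR (s * X x))%:E + (b * expR (t * X x))%:E))%E).
  apply: ge0_le_integral => //.
  - exact/measurable_EFinP/measurable_expR_mul.
  - exact: emeasurable_funD.
  - by move=> x _; rewrite -EFinD lee_fin pointwise.
have coef_ge0 (c u : R) : 0 <= c -> forall x, [set: T] x -> (0 <= (c * expR (u * X x))%:E)%E.
  by move=> c_ge0 x _; rewrite lee_fin mulr_ge0 ?expR_ge0.
rewrite ge0_integralD //; last 2 first.
- exact: coef_ge0.
- exact: coef_ge0.
rewrite (int_scale a s a_ge0) (int_scale b t b_ge0) -(mgf_fineK hs) -(mgf_fineK ht).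
rewrite -/ms -/mt -!EFinM -EFinD lee_fin /a /b !divfK ?gt_eqF //.
by rewrite -mulrDr subrKC mulr1.
Qed.

End MomentGeneratingFunction.

Section MgfConvexity.
Context (R : realType) (d : measure_display) (T : measurableType d)
  (P : probability T R) (X : T -> R) (s t lam : R).
Hypotheses (mX : measurable_fun setT X) (hs : in_mgf_domain P X s)
  (ht : in_mgf_domain P X t) (lam_ge0 : 0 <= lam) (lam_le1 : lam <= 1).

Lemma in_mgf_domain_conv : in_mgf_domain P X (lam * s + (1 - lam) * t).
Proof. exact: le_lt_trans (mgf_le_geomean mX hs ht lam_ge0 lam_le1) (ltry _). Qed.

Lemma fine_mgf_le_geomean : fine (mgf P X (lam * s + (1 - lam) * t)) <=
  geomean lam (fine (mgf P X s)) (fine (mgf P X t)).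
Proof.
by rewrite -lee_fin mgf_fineK; [exact: mgf_le_geomean | exact: in_mgf_domain_conv].
Qed.

Lemma log_mgf_convex : log_mgf P X (lam * s + (1 - lam) * t) <=
  lam * log_mgf P X s + (1 - lam) * log_mgf P X t.
Proof.
rewrite /log_mgf -ln_geomean ler_ln ?posrE ?geomean_gt0 ?fine_mgf_le_geomean //.
exact/mgf_gt0/in_mgf_domain_conv.
Qed.

End MgfConvexity.

Lemma convex_neg_at0_root_unique (R : realFieldType) (F : R -> R) (D : set R) :
  D 0 -> (forall s t lam, D s -> D t -> 0 <= lam -> lam <= 1 ->
            F (lam * s + (1 - lam) * t) <= lam * F s + (1 - lam) * F t) ->
  F 0 < 0 ->
  forall a b, 0 < a -> 0 < b -> D a -> D b -> F a = 0 -> F b = 0 -> a = b.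
Proof.
move=> D0 Fconv F0_lt0 a b.
wlog ab : a b / a <= b.
  move=> hwlog a_gt0 b_gt0 Da Db Fa Fb; have [ab|/ltW ba] := leP a b.
    exact: hwlog ab a_gt0 b_gt0 Da Db Fa Fb.
  exact: esym (hwlog b a ba b_gt0 a_gt0 Db Da Fb Fa).
move=> a_gt0 b_gt0 Da Db Fa Fb; apply/eqP; rewrite eq_le ab /=; apply: contraT.
rewrite -ltNge => ab_lt.
have lam_ge0 : 0 <= a / b by rewrite divr_ge0 ?ltW.
have lam_lt1 : a / b < 1 by rewrite ltr_pdivrMr // mul1r.
have := Fconv b 0 (a / b) Db D0 lam_ge0 (ltW lam_lt1).
rewrite mulr0 addr0 divfK ?gt_eqF // Fa Fb mulr0 add0r.
have : (1 - a / b) * F 0 < 0 by rewrite pmulr_rlt0 // subr_gt0.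
lra.
Qed.

Section RegimeSwitchingMatrix.
Context (R : realType) (d : measure_display) (T : measurableType d)
  (P : probability T R) (N : nat) (Pi : 'M[R]_N) (L : 'I_N -> R -> T -> R)
  (X : 'I_N -> 'I_N -> T -> R) (phi : 'I_N -> R).
Hypothesis Pi_offdiag : forall n n' : 'I_N, n != n' -> 0 <= Pi n n'.
Hypothesis mL : forall n, measurable_fun setT (L n 1).
Hypothesis mX : forall n n', measurable_fun setT (X n n').
Local Notation A := (Amat P L X Pi phi).
Local Notation I := (Idom P L X Pi).

Lemma Amat_diag s i : A s i i = levy_exponent P (L i) s + (Pi i i - phi i).
Proof. by rewrite /Amat !mxE eqxx !mulr1n mulr1 addrA. Qed.

Lemma Amat_offdiag s i j : i != j ->
  A s i j = Pi i j * (if Pi i j == 0 then 1 else fine (mgf P (X i j) s)).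
Proof. by move=> ij; rewrite /Amat !mxE (negbTE ij) !mulr0n add0r subr0. Qed.

Lemma Amat_metzler s : metzler (A s).
Proof.
move=> i j ij; rewrite Amat_offdiag // mulr_ge0 ?Pi_offdiag //.
by case: ifP => _; rewrite ?fine_ge0 ?mgf_ge0.
Qed.

Lemma Amat0 : A 0 = Pi - diag_mx (\row_n phi n).
Proof.
apply/matrixP => i j; have [<-|ij] := eqVneq i j.
  by rewrite Amat_diag /levy_exponent /log_mgf mgf0 ln1 add0r !mxE eqxx mulr1n.
by rewrite Amat_offdiag // !mxE (negbTE ij) mulr0n subr0 mgf0; case: ifP; rewrite mulr1.
Qed.

Lemma Idom0 : I 0.
Proof. by split=> [n|n n' _ _]; rewrite /in_mgf_domain mgf0 ltry. Qed.

Lemma Idom_conv s t lam : I s -> I t -> 0 <= lam -> lam <= 1 -> I (lam * s + (1 - lam) * t).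
Proof.
move=> [hs1 hs2] [ht1 ht2] lam_ge0 lam_le1; split=> [n|n n' nn' Pi_neq0].
  exact: in_mgf_domain_conv.
exact: in_mgf_domain_conv (hs2 _ _ nn' Pi_neq0) (ht2 _ _ nn' Pi_neq0) _ _.
Qed.

Section Convexity.
Variables (s t lam : R).
Hypotheses (hs : I s) (ht : I t) (lam_ge0 : 0 <= lam) (lam_le1 : lam <= 1).
Local Notation u := (lam * s + (1 - lam) * t).

(* The entries are passed to abstract local lemmas instead of being rewritten:
   rewriting with [Amat_diag] or [Amat_offdiag] at two different points makes Rocq
   unfold the MGF integrals when it compares [A u] with [A s]. *)
Lemma Amat_diag_convex j : A u j j <= lam * A s j j + (1 - lam) * A t j j.
Proof.
have shift (cu cs ct x y z c : R) : cu = x + c -> cs = y + c -> ct = z + c ->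
    x <= lam * y + (1 - lam) * z -> cu <= lam * cs + (1 - lam) * ct.
  by move=> -> -> -> hx; lra.
exact: shift (Amat_diag u j) (Amat_diag s j) (Amat_diag t j)
  (log_mgf_convex (mL j) (hs.1 j) (ht.1 j) lam_ge0 lam_le1).
Qed.

Lemma Amat_offdiag_log_convex j k : j != k -> A u j k = 0 \/
  [/\ 0 < A s j k, 0 < A t j k & A u j k <= geomean lam (A s j k) (A t j k)].
Proof.
move=> jk; pose m v := if Pi j k == 0 then 1 else fine (mgf P (X j k) v).
have scale (p mu ms mt cu cs ct : R) : 0 <= p -> 0 < ms -> 0 < mt ->
    mu <= geomean lam ms mt -> cu = p * mu -> cs = p * ms -> ct = p * mt ->
    cu = 0 \/ [/\ 0 < cs, 0 < ct & cu <= geomean lam cs ct].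
  rewrite le_eqVlt => /predU1P [<-|p_gt0] ms_gt0 mt_gt0 hmu -> -> ->.
    by left; rewrite mul0r.
  by right; rewrite !mulr_gt0 // geomeanM // geomeanxx // ler_pM2l.
have [mu_le ms_gt0 mt_gt0] : [/\ m u <= geomean lam (m s) (m t), 0 < m s & 0 < m t].
  rewrite /m; case: eqP => [_|/eqP Pi_neq0]; first by rewrite geomeanxx.
  have [hsk htk] := (hs.2 _ _ jk Pi_neq0, ht.2 _ _ jk Pi_neq0).
  split; [exact: fine_mgf_le_geomean | exact: mgf_gt0 | exact: mgf_gt0].
exact: scale (Pi_offdiag jk) ms_gt0 mt_gt0 mu_le
  (Amat_offdiag u jk) (Amat_offdiag s jk) (Amat_offdiag t jk).
Qed.

Lemma spectral_abscissa_Amat_convex : (0 < N)%N ->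
  spectral_abscissa (A u) <= lam * spectral_abscissa (A s) + (1 - lam) * spectral_abscissa (A t).
Proof.
move=> N_gt0; apply: spectral_abscissa_geomean_le => //; try exact: Amat_metzler.
  exact: Amat_diag_convex.
exact: Amat_offdiag_log_convex.
Qed.

End Convexity.

Lemma spectral_abscissa_Amat0_le0 : (0 < N)%N ->
  (forall n, \sum_(n' < N) Pi n n' = 0) -> (forall n, 0 <= phi n) ->
  spectral_abscissa (A 0) <= 0.
Proof.
move=> N_gt0 Pi_row phi_ge0; rewrite Amat0.
apply: (spectral_abscissa_le (z := fun=> 1)) => // [i j ij|j].
  by rewrite !mxE (negbTE ij) mulr0n subr0 Pi_offdiag.
under eq_bigr do rewrite !mxE mulrBl.
rewrite sumrB sum_delta; under eq_bigr do rewrite mulr1.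
by rewrite Pi_row mul0r mulr1 sub0r oppr_le0.
Qed.

End RegimeSwitchingMatrix.

Theorem proposition2 (R : realType) (d : measure_display) (T : measurableType d)
  (P : probability T R) (N : nat) (hN : (0 < N)%N)
  (Pi : 'M[R]_N) (L : 'I_N -> R -> T -> R) (X : 'I_N -> 'I_N -> T -> R)
  (phi : 'I_N -> R)
  (hPi_off : forall n n' : 'I_N, n != n' -> 0 <= Pi n n')
  (hPi_row : forall n : 'I_N, \sum_(n' < N) Pi n n' = 0)
  (hL : forall n, levy_process P (L n))
  (hX : forall n n', measurable_fun setT (X n n'))
  (hphi : forall n, 0 <= phi n) :
  let A := Amat P L X Pi phi in
  let I := Idom P L X Pi in
  (forall s t lam : R, I s -> I t -> 0 <= lam -> lam <= 1 ->
     I (lam * s + (1 - lam) * t) /\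
     spectral_abscissa (A (lam * s + (1 - lam) * t))
       <= lam * spectral_abscissa (A s) + (1 - lam) * spectral_abscissa (A t)) /\
  spectral_abscissa (A 0) <= 0 /\
  (spectral_abscissa (A 0) < 0 ->
     (forall a b : R, 0 < a -> 0 < b -> I a -> I b ->
        spectral_abscissa (A a) = 0 -> spectral_abscissa (A b) = 0 -> a = b) /\
     (forall a b : R, 0 < a -> 0 < b -> I (- a) -> I (- b) ->
        spectral_abscissa (A (- a)) = 0 -> spectral_abscissa (A (- b)) = 0 -> a = b)).
Proof.
move=> A I.
have mL n : measurable_fun setT (L n 1) by case: (hL n) => + _ _ _ _; apply; exact: ler01.
have conv s t lam : I s -> I t -> 0 <= lam -> lam <= 1 ->
    spectral_abscissa (A (lam * s + (1 - lam) * t)) <=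
      lam * spectral_abscissa (A s) + (1 - lam) * spectral_abscissa (A t).
  by move=> *; exact: spectral_abscissa_Amat_convex.
split; first by move=> s t lam *; split; [exact: Idom_conv | exact: conv].
split; first exact: spectral_abscissa_Amat0_le0.
move=> A0_lt0; split.
  apply: (@convex_neg_at0_root_unique _ (fun s => spectral_abscissa (A s)) I) => //.
  exact: Idom0.
apply: (@convex_neg_at0_root_unique _ (fun s => spectral_abscissa (A (- s))) (fun s => I (- s))).
- by rewrite oppr0; exact: Idom0.
- move=> s t lam hs ht lam_ge0 lam_le1.
  by rewrite (_ : - _ = lam * - s + (1 - lam) * - t) ?conv //; ring.
- by rewrite oppr0.
Qed.
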